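(* Consider the two-layer multi-item order fulfillment problem described in the context with a single FDC ($K=1$). Let an algorithm produce a feasible plan $\{m_{k,t}^i\}$ with FDC inventories $I_{1,t}^i=I_{1,0}^i-\sum_{\tau\le t}m_{1,\tau}^i$, and let $\hat m_{1,t}^i=\min\{S_t^i,I_{1,t-1}^i\}$. Suppose that for every $i$ and $t$, either $m_{1,t}^i=\hat m_{1,t}^i$ or $m_{1,t}^i=0$. Let $\{m_{k,t}^{i,*}\}$ be an optimal offline plan. Fix an item $i$ and let $C_i=\{t:m_{1,t}^i>0\}$. Then for every set $B\subseteq[T]$ with $B\supseteq C_i$, \[\sum_{t\in B}\hat m_{1,t}^i\ \ge\ \sum_{t\in B}m_{1,t}^{i,*}.\]
   Context: Problem with one FDC (index $1$) and one RDC (index $0$, unlimited inventory). The FDC initially holds $I_{1,0}^i\ge0$ units of item $i\in[n]$, never replenished. In periods $t=1,\dots,T$ an order $\boldsymbol S_t=(S_t^i)_i$ of nonnegative integers arrives with variable costs $c_{k,t}^i$; a feasible plan chooses $m_{0,t}^i,m_{1,t}^i\ge0$ with $m_{0,t}^i+m_{1,t}^i=S_t^i$ and $\sum_{\tau\le t}m_{1,\tau}^i\le I_{1,0}^i$. The period cost is $\sum_{k=0,1}[f_k\mathbb{I}(\sum_im_{k,t}^i>0)+\sum_ic_{k,t}^im_{k,t}^i]$; an optimal offline plan minimizes total cost over all feasible plans with full knowledge of the instance. *)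

From mathcomp Require Import all_boot all_order all_algebra.
Set Implicit Arguments. Unset Strict Implicit. Unset Printing Implicit Defensive.
Import Order.TTheory GRing.Theory Num.Theory.

(* Conventions: items are 'I_n; periods are the natural numbers t with
   1 <= t <= T.  A plan is a pair of functions m0 m1 : nat -> 'I_n -> nat
   (m_{0,t}^i and m_{1,t}^i); only their values at periods 1..T matter.
   Index 0 is the RDC, index 1 is the (single) FDC. *)

Definition fdc_inv (n : nat) (I0 : 'I_n -> nat) (m1 : nat -> 'I_n -> nat)
  (t : nat) (i : 'I_n) : nat :=
  I0 i - \sum_(1 <= tau < t.+1) m1 tau i.

(* Feasibility of a plan. Nonnegativity and integrality are built into nat. *)
Definition feasible (n T : nat) (I0 : 'I_n -> nat) (S : nat -> 'I_n -> nat)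
  (m0 m1 : nat -> 'I_n -> nat) : Prop :=
  (forall t i, 1 <= t <= T -> m0 t i + m1 t i = S t i) /\
  (forall t i, 1 <= t <= T -> \sum_(1 <= tau < t.+1) m1 tau i <= I0 i).

Definition period_cost (R : numDomainType) (n : nat) (f0 f1 : R)
  (c0 c1 : nat -> 'I_n -> R) (m0 m1 : nat -> 'I_n -> nat) (t : nat) : R :=
  ((if (0 < \sum_(i < n) m0 t i)%N then f0 else 0)
     + \sum_(i < n) c0 t i * (m0 t i)%:R
   + ((if (0 < \sum_(i < n) m1 t i)%N then f1 else 0)
     + \sum_(i < n) c1 t i * (m1 t i)%:R))%R.

Definition total_cost (R : numDomainType) (n T : nat) (f0 f1 : R)
  (c0 c1 : nat -> 'I_n -> R) (m0 m1 : nat -> 'I_n -> nat) : R :=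
  (\sum_(1 <= t < T.+1) period_cost f0 f1 c0 c1 m0 m1 t)%R.

Definition optimal_plan (R : numDomainType) (n T : nat) (I0 : 'I_n -> nat)
  (S : nat -> 'I_n -> nat) (f0 f1 : R) (c0 c1 : nat -> 'I_n -> R)
  (m0 m1 : nat -> 'I_n -> nat) : Prop :=
  feasible T I0 S m0 m1 /\
  forall m0' m1', feasible T I0 S m0' m1' ->
    (total_cost T f0 f1 c0 c1 m0 m1 <= total_cost T f0 f1 c0 c1 m0' m1')%R.

Definition mhat (n : nat) (I0 : 'I_n -> nat) (S : nat -> 'I_n -> nat)
  (m1 : nat -> 'I_n -> nat) (t : nat) (i : 'I_n) : nat :=
  minn (S t i) (fdc_inv I0 m1 t.-1 i).

From mathcomp Require Import all_boot all_order all_algebra.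

Set Implicit Arguments.
Unset Strict Implicit.

(* When the optimal plan's period k+1 lies in B,
   either hat m_{1,k+1} = S_{k+1}, which bounds m*_{1,k+1}, or
   hat m_{1,k+1} = I_{1,k} = I_{1,0} - sum_{t<=k} m_{1,t}; in the latter case
   the whole cumulative shipment of the optimal plan is at most I_{1,0}, while
   the algorithm's shipments up to k are all of the form hat m_{1,t} with t in B. *)

Lemma sum_nat_recr_cond (P : pred nat) (F : nat -> nat) m k : m <= k ->
  \sum_(m <= t < k.+1 | P t) F t =
  \sum_(m <= t < k | P t) F t + (if P k then F k else 0).
Proof. by move=> le_mk; rewrite big_mkcond big_nat_recr // -big_mkcond. Qed.

Section SingleItem.

Variables (n T : nat) (I0 : 'I_n -> nat) (S : nat -> 'I_n -> nat).
Variables (m1 : nat -> 'I_n -> nat) (i : 'I_n) (B : pred nat).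

Hypothesis m1_cum : forall t, 1 <= t <= T -> \sum_(1 <= tau < t.+1) m1 tau i <= I0 i.

Lemma fdc_inv_addK k : k <= T ->
  fdc_inv I0 m1 k i + \sum_(1 <= t < k.+1) m1 t i = I0 i.
Proof.
case: k => [|k] kT; first by rewrite /fdc_inv big_geq // subn0 addn0.
by rewrite /fdc_inv subnK //; apply: m1_cum.
Qed.

Hypothesis m1_mhat_or_0 : forall t, 1 <= t <= T ->
  m1 t i = mhat I0 S m1 t i \/ m1 t i = 0.
Hypothesis m1_supp_in_B : forall t, 1 <= t <= T -> 0 < m1 t i -> B t.

Lemma sum_m1_le_sum_mhat_in k : k <= T ->
  \sum_(1 <= t < k.+1) m1 t i <= \sum_(1 <= t < k.+1 | B t) mhat I0 S m1 t i.
Proof.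
move=> kT; rewrite [leqRHS]big_mkcond !big_nat; apply: leq_sum => t /andP[t_ge1 t_lek].
have tT : 1 <= t <= T by rewrite t_ge1 -ltnS (leq_trans t_lek).
have [-> //|m1_gt0] := posnP (m1 t i).
case: (m1_mhat_or_0 tT) => [->|m1_eq0]; last by rewrite m1_eq0 in m1_gt0.
by rewrite m1_supp_in_B.
Qed.

Variable ms : nat -> nat.
Hypothesis ms_le_S : forall t, 1 <= t <= T -> ms t <= S t i.
Hypothesis ms_cum : forall t, 1 <= t <= T -> \sum_(1 <= tau < t.+1) ms tau <= I0 i.

Lemma sum_in_le_sum_mhat_in k : k <= T ->
  \sum_(1 <= t < k.+1 | B t) ms t <= \sum_(1 <= t < k.+1 | B t) mhat I0 S m1 t i.
Proof.
elim: k => [|k IHk] kT; first by rewrite !big_geq.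
have kT1 : 1 <= k.+1 <= T by [].
rewrite !(@sum_nat_recr_cond _ _ 1 k.+1) //.
case Bk: (B k.+1); last by rewrite !addn0 IHk // ltnW.
rewrite [mhat _ _ _ k.+1 _]/mhat /=.
case: (leqP (S k.+1 i) (fdc_inv I0 m1 k i)) => [S_le | inv_lt].
  by rewrite leq_add ?IHk ?ms_le_S // ltnW.
have sum_ms_le : \sum_(1 <= t < k.+2 | B t) ms t <= I0 i.
  by apply: leq_trans (ms_cum kT1); rewrite [leqRHS](bigID B) /= leq_addr.
rewrite sum_nat_recr_cond // Bk in sum_ms_le.
apply: leq_trans sum_ms_le _.
rewrite -(fdc_inv_addK (ltnW kT)) addnC leq_add2r.
exact: sum_m1_le_sum_mhat_in (ltnW kT).
Qed.

End SingleItem.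

Theorem mainTheorem13 (R : realFieldType) (n T : nat) (I0 : 'I_n -> nat)
  (Sd : nat -> 'I_n -> nat) (f0 f1 : R) (c0 c1 : nat -> 'I_n -> R)
  (m0 m1 : nat -> 'I_n -> nat)
  (Hfeas : feasible T I0 Sd m0 m1)
  (Hdich : forall (i : 'I_n) (t : nat), 1 <= t <= T ->
     m1 t i = mhat I0 Sd m1 t i \/ m1 t i = 0)
  (ms0 ms1 : nat -> 'I_n -> nat)
  (Hopt : optimal_plan T I0 Sd f0 f1 c0 c1 ms0 ms1)
  (i : 'I_n) (B : pred nat)
  (HB : forall t, B t -> 1 <= t <= T)
  (HCB : forall t, 1 <= t <= T -> 0 < m1 t i -> B t) :
  \sum_(1 <= t < T.+1 | B t) ms1 t i <= \sum_(1 <= t < T.+1 | B t) mhat I0 Sd m1 t i.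
Proof.
have [[ms_split ms_cum] _] := Hopt.
have [_ m1_cum] := Hfeas.
have ms_le_S t : 1 <= t <= T -> ms1 t i <= Sd t i.
  by move=> tT; rewrite -(ms_split t i tT) leq_addl.
exact: (sum_in_le_sum_mhat_in (m1_cum^~ i) (Hdich i) HCB ms_le_S (ms_cum^~ i) (leqnn T)).
Qed.
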